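(* Let $D$ be a derivation acting on monomials $x^\lambda y^\mu$ ($\lambda,\mu\in\mathbb C$) in two indeterminates $x,y$ and their linear combinations, satisfying Leibniz's rule and $D(x^\lambda y^\mu)=x^\lambda y^\mu\bigl(\lambda x^{-1}Dx+\mu y^{-1}Dy\bigr)$. Suppose $Dx=x^{1+\alpha}y^{\alpha'}$ and $Dy=x^{\alpha+\beta}y^{1+\alpha'+\beta'}$. Then for all $n\ge0$ and all $\gamma,\gamma'\in\mathbb C$, $$D^n\bigl(x^\gamma y^{\gamma'}\bigr)=x^\gamma y^{\gamma'}\,\bigl(x^\alpha y^{\alpha'}\bigr)^n\sum_{k=0}^n\left[\begin{array}{cc|c}\alpha,&\beta&\gamma\\ \alpha',&\beta'&\gamma'\end{array}\right]_{n,k}\bigl(x^\beta y^{\beta'}\bigr)^k,$$ i.e. $D^n(x^\gamma y^{\gamma'})=x^\gamma y^{\gamma'}(x^\alpha y^{\alpha'})^nG_n(x^\beta y^{\beta'})$ where $G_n$ is the $n$th row polynomial of this GKP triangle.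
   Context: GKP triangle: for complex parameters $\alpha,\beta,\gamma,\alpha',\beta',\gamma'$, the array $T_{n,k}=\left[\begin{array}{cc|c}\alpha,&\beta&\gamma\\ \alpha',&\beta'&\gamma'\end{array}\right]_{n,k}$ is defined by $T_{0,0}=1$, $T_{n,k}=0$ if $n<0$, $k<0$ or $k>n$, and $T_{n+1,k+1}=[\alpha n+\beta(k+1)+\gamma]T_{n,k+1}+[\alpha' n+\beta' k+\gamma']T_{n,k}$ for $n\ge0$, $k\in\mathbb Z$; its $n$th row polynomial is $G_n(t)=\sum_{k=0}^nT_{n,k}t^k$. *)

From HB Require Import structures.
From mathcomp Require Import all_boot all_order all_algebra.
Set Implicit Arguments. Unset Strict Implicit. Unset Printing Implicit Defensive.
Import Order.TTheory GRing.Theory Num.Theory.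
Local Open Scope ring_scope.

Fixpoint gkp {C : numClosedFieldType} (a b g a' b' g' : C) (n : nat) : nat -> C :=
  match n with
  | 0%N => fun k => if k == 0%N then 1 else 0
  | n'.+1 => fun k =>
      (a * n'%:R + b * k%:R + g) * gkp a b g a' b' g' n' k
      + (if k is k'.+1 then (a' * n'%:R + b' * k'%:R + g') * gkp a b g a' b' g' n' k'
         else 0)
  end.

From HB Require Import structures.
From mathcomp Require Import all_boot all_order all_algebra.
From mathcomp Require Import ring.
Set Implicit Arguments. Unset Strict Implicit. Unset Printing Implicit Defensive.
Import Order.TTheory GRing.Theory Num.Theory.
Local Open Scope ring_scope.

(* With Dx, Dy as given, the logarithmic form of D becomes
   D(x^l y^m) = l x^(l+a) y^(m+a') + m x^(l+a+b) y^(m+a'+b').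
   Hence the monomials M_{n,k} = x^(g + a n + b k) y^(g' + a' n + b' k) satisfy
   D M_{n,k} = (a n + b k + g) M_{n+1,k} + (a' n + b' k + g') M_{n+1,k+1},
   which is exactly the GKP recurrence, so D^n(x^g y^g') = sum_k T_{n,k} M_{n,k};
   factoring M_{n,k} = x^g y^g' (x^a y^a')^n (x^b y^b')^k gives the theorem. *)

Section GKPTriangle.

Variables (C : numClosedFieldType) (a b g a' b' g' : C).

Local Notation T := (gkp a b g a' b' g').

Lemma gkp_eq0 n k : (n < k)%N -> T n k = 0.
Proof.
elim: n k => [|n IHn] [|[|k]] //= ltnk; rewrite IHn ?(ltnW ltnk) // mulr0 add0r //.
by rewrite IHn // mulr0.
Qed.

Lemma gkp_row_step (V : lmodType C) (F : nat -> V) n :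
  \sum_(k < n.+1) T n k *:
     ((a * n%:R + b * k%:R + g) *: F k + (a' * n%:R + b' * k%:R + g') *: F k.+1)
  = \sum_(k < n.+2) T n.+1 k *: F k.
Proof.
under eq_bigr do rewrite scalerDr !scalerA.
rewrite big_split /= [RHS](eq_bigr _ (fun k _ => scalerDl _ _ _)) big_split /=.
congr (_ + _).
  rewrite [RHS]big_ord_recr /= gkp_eq0 // mulr0 scale0r addr0.
  by apply: eq_bigr => k _; rewrite mulrC.
rewrite [RHS]big_ord_recl /= scale0r add0r.
by apply: eq_bigr => k _; rewrite mulrC.
Qed.

End GKPTriangle.

Section MonomialDerivation.

Variables (C : numClosedFieldType) (A : comAlgType C) (mon : C -> C -> A).
Hypothesis mon0 : mon 0 0 = 1.
Hypothesis monM : forall l m l' m', mon l m * mon l' m' = mon (l + l') (m + m').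

Lemma monX l m k : mon l m ^+ k = mon (l * k%:R) (m * k%:R).
Proof.
elim: k => [|k IHk]; first by rewrite expr0 !mulr0 mon0.
by rewrite exprS IHk monM; congr mon; rewrite mulrS; ring.
Qed.

Variable D : A -> A.
Hypothesis D_add : forall u v, D (u + v) = D u + D v.
Hypothesis D_scale : forall (c : C) u, D (c *: u) = c *: D u.
Hypothesis D_mon : forall l m, D (mon l m) =
  mon l m * (l *: (mon (-1) 0 * D (mon 1 0)) + m *: (mon 0 (-1) * D (mon 0 1))).

Lemma D_sum n (F : 'I_n -> A) : D (\sum_(i < n) F i) = \sum_(i < n) D (F i).
Proof.
have D0 : D 0 = 0 by rewrite -(scale0r 0) D_scale !scale0r.
exact: (big_morph D D_add D0).
Qed.

Variables (a b a' b' : C).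
Hypothesis Dx : D (mon 1 0) = mon (1 + a) a'.
Hypothesis Dy : D (mon 0 1) = mon (a + b) (1 + a' + b').

Lemma D_monE l m :
  D (mon l m) = l *: mon (l + a) (m + a') + m *: mon (l + (a + b)) (m + (a' + b')).
Proof.
rewrite D_mon Dx Dy !monM mulrDr -!scalerAr !monM.
by congr (_ *: mon _ _ + _ *: mon _ _); ring.
Qed.

Variables (g g' : C).

Definition gkp_mon (n k : nat) : A :=
  mon (a * n%:R + b * k%:R + g) (a' * n%:R + b' * k%:R + g').

Lemma D_gkp_mon n k :
  D (gkp_mon n k) = (a * n%:R + b * k%:R + g) *: gkp_mon n.+1 k
                    + (a' * n%:R + b' * k%:R + g') *: gkp_mon n.+1 k.+1.
Proof.
by rewrite /gkp_mon D_monE; congr (_ *: mon _ _ + _ *: mon _ _); rewrite ?mulrS; ring.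
Qed.

Lemma iter_D_mon n :
  iter n D (mon g g') = \sum_(k < n.+1) gkp a b g a' b' g' n k *: gkp_mon n k.
Proof.
elim: n => [|n IHn].
  by rewrite big_ord1 /= scale1r /gkp_mon; congr mon; ring.
rewrite iterS IHn D_sum -gkp_row_step.
by apply: eq_bigr => k _; rewrite D_scale D_gkp_mon.
Qed.

Lemma gkp_monE n k :
  gkp_mon n k = mon g g' * mon a a' ^+ n * mon b b' ^+ k.
Proof. by rewrite /gkp_mon !monX !monM; congr mon; ring. Qed.

End MonomialDerivation.

Theorem mainTheorem19 (C : numClosedFieldType) (A : comAlgType C)
    (mon : C -> C -> A)
    (mon0 : mon 0 0 = 1)
    (monM : forall l m l' m', mon l m * mon l' m' = mon (l + l') (m + m'))
    (D : A -> A)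
    (D_add : forall u v, D (u + v) = D u + D v)
    (D_scale : forall (c : C) u, D (c *: u) = c *: D u)
    (D_leibniz : forall u v, D (u * v) = D u * v + u * D v)
    (D_mon : forall l m, D (mon l m) =
        mon l m * (l *: (mon (-1) 0 * D (mon 1 0)) + m *: (mon 0 (-1) * D (mon 0 1))))
    (a b a' b' : C)
    (Dx : D (mon 1 0) = mon (1 + a) a')
    (Dy : D (mon 0 1) = mon (a + b) (1 + a' + b'))
    (n : nat) (g g' : C) :
  iter n D (mon g g') =
    mon g g' * (mon a a') ^+ n *
      \sum_(k < n.+1) gkp a b g a' b' g' n k *: (mon b b') ^+ k.
Proof.
rewrite (iter_D_mon monM D_add D_scale D_mon Dx Dy) mulr_sumr.
by apply: eq_bigr => k _; rewrite (gkp_monE mon0 monM) -scalerAr.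
Qed.
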